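(* Let $\ket{\psi}$ be a pure state on a tripartite system $ABC$ and let $\mathcal{E}$ be a quantum channel (CPTP map) applied to subsystem $B$. Let $\sigma=(\mathrm{id}_{AC}\otimes\mathcal{E})(\ket{\psi}\bra{\psi})$ be the resulting state on $A\,\mathcal{E}[B]\,C$, and let $\delta I = I(A:C|\mathcal{E}[B]) - I(A:C|B)$, where the first term is evaluated in $\sigma$ and the second in $\ket{\psi}$. Then $$\delta I\le 2\,S(A\,\mathcal{E}[B]\,C),$$ where $S(A\,\mathcal{E}[B]\,C)$ is the von Neumann entropy of $\sigma$.
   Context: The quantum conditional mutual information is $I(A:C|B)=S(AB)+S(BC)-S(B)-S(ABC)$ with von Neumann entropies. $\mathcal{E}[B]$ denotes the output system of the channel acting on $B$. *)

From HB Require Import structures.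
From mathcomp Require Import all_boot all_order all_algebra.
From mathcomp Require Import reals exp.
From mathcomp Require Import complex.
Set Implicit Arguments. Unset Strict Implicit. Unset Printing Implicit Defensive.
Import Order.TTheory GRing.Theory Num.Theory.
Local Open Scope ring_scope.

Section QInfo.
Variable R : realType.
Local Notation Cx := (complex R).

(* Operators on the Hilbert space C^I (I a finite index set = computational basis) *)
Definition op (I : finType) := I -> I -> Cx.

Definition cconj (z : Cx) : Cx := conjc z.

Definition mx_of (I : finType) (M : op I) : 'M[Cx]_#|I| :=
  \matrix_(i, j) M (enum_val i) (enum_val j).

Lemma char_poly_splits (I : finType) (M : op I) :
  exists r : seq Cx, char_poly (mx_of M) == \prod_(z <- r) ('X - z%:P).
Proof.
have [r Hr] := closed_field_poly_normal (char_poly (mx_of M)).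
exists r; apply/eqP; rewrite Hr.
by have /monicP -> := char_poly_monic (mx_of M); rewrite scale1r.
Qed.

(* the eigenvalues (with multiplicity) of M: roots of its characteristic polynomial *)
Definition spectrum (I : finType) (M : op I) : seq Cx := xchoose (char_poly_splits M).

Definition xlnx (x : R) : R := if x == 0 then 0 else x * ln x.

(* von Neumann entropy S(rho) = - Tr (rho ln rho) = - sum_lambda lambda ln lambda
   (natural logarithm, 0 ln 0 = 0; eigenvalues of a density matrix are real) *)
Definition vN_entropy (I : finType) (rho : op I) : R :=
  - \sum_(z <- spectrum rho) xlnx (complex.Re z).

Definition trace (I : finType) (M : op I) : Cx := \sum_i M i i.

Definition psd (I : finType) (M : op I) : Prop :=
  forall v : I -> Cx, 0 <= \sum_i \sum_j cconj (v i) * M i j * v j.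

Definition is_linear_map (I J : finType) (E : op I -> op J) : Prop :=
  forall (a : Cx) (X Y : op I), E (fun i i' => a * X i i' + Y i i') =
                                (fun j j' => a * E X j j' + E Y j j').

Definition id_tensor (n : nat) (I J : finType) (E : op I -> op J)
    (X : op ('I_n * I)%type) : op ('I_n * J)%type :=
  fun p q => E (fun i i' => X (p.1, i) (q.1, i')) p.2 q.2.

Definition CPTP (I J : finType) (E : op I -> op J) : Prop :=
  [/\ is_linear_map E,
      (forall X, trace (E X) = trace X) &
      (forall (n : nat) (X : op ('I_n * I)%type), psd X -> psd (id_tensor E X))].

(* tripartite system A B C, indexed by ((a, b), c) *)
Definition ptr_C (A B C : finType) (rho : op ((A * B) * C)%type) : op (A * B)%type :=
  fun x y => \sum_c rho (x, c) (y, c).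
Definition ptr_A (A B C : finType) (rho : op ((A * B) * C)%type) : op (B * C)%type :=
  fun x y => \sum_a rho ((a, x.1), x.2) ((a, y.1), y.2).
Definition ptr_AC (A B C : finType) (rho : op ((A * B) * C)%type) : op B :=
  fun b b' => \sum_a \sum_c rho ((a, b), c) ((a, b'), c).

Definition cmi (A B C : finType) (rho : op ((A * B) * C)%type) : R :=
  vN_entropy (ptr_C rho) + vN_entropy (ptr_A rho)
  - vN_entropy (ptr_AC rho) - vN_entropy rho.

Definition proj (I : finType) (psi : I -> Cx) : op I :=
  fun i j => psi i * cconj (psi j).

Definition unit_vector (I : finType) (psi : I -> Cx) : Prop :=
  \sum_i psi i * cconj (psi i) = 1.

Definition apply_on_B (A B B' C : finType) (E : op B -> op B')
    (rho : op ((A * B) * C)%type) : op ((A * B') * C)%type :=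
  fun x y => E (fun b b' => rho ((x.1.1, b), x.2) ((y.1.1, b'), y.2)) x.1.2 y.1.2.

End QInfo.

(* Since [rho] is pure, S(AB) = S(C), S(BC) = S(A), S(B) = S(AC) and S(ABC) = 0,
   so I(A:C|B) = S(A) + S(C) - S(AC) in [rho].  The channel acts on B only, hence
   [sigma] has the same marginals on A, C and AC as [rho].  The Araki-Lieb
   inequality S(X) <= S(Y) + S(XY), applied to [sigma] across the cuts AB'|C,
   B'C|A and AC|B', then bounds S(AB'), S(B'C) and -S(B') and yields
   dI <= 2 S(AB'C).
   Araki-Lieb follows from subadditivity on a purification; subadditivity reduces
   to Gibbs' inequality after expanding all three states in eigenbases; and the
   two halves of a pure state have equal entropy because the characteristic
   polynomials of M N and N M agree up to a power of X. *)

From HB Require Import structures.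
From mathcomp Require Import all_boot all_order all_algebra.
From mathcomp Require Import reals exp boolp.
From mathcomp Require Import complex spectral.
From mathcomp Require Import ring lra.
Import Order.TTheory GRing.Theory Num.Theory.
Set Implicit Arguments. Unset Strict Implicit. Unset Printing Implicit Defensive.
Local Open Scope complex_scope.
Local Open Scope ring_scope.

Section Operators.
Variable R : realType.
Local Notation Cx := (complex R).

Lemma conjCE (z : Cx) : (z^*)%R = conjc z.
Proof.
have [->|nz] := eqVneq z 0; first by rewrite conjC0 conjc0.
by apply: (mulfI nz); rewrite -normCK sqr_normc.
Qed.

Lemma ge0_complexE (z : Cx) : 0 <= z -> z = (complex.Re z)%:C.
Proof. by case: z => a b; rewrite lecE /= => /andP[/eqP -> _]. Qed.

Lemma conjc_real (r : R) : conjc r%:C = r%:C.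
Proof. by apply/eqP; rewrite eq_complex /= oppr0 !eqxx. Qed.

Lemma conjcM (a b : Cx) : conjc (a * b) = conjc a * conjc b.
Proof. exact: rmorphM. Qed.

Lemma sum_unit (V : nmodType) (F : unit -> V) : \sum_u F u = F tt.
Proof. by rewrite (big_pred1 tt) // => -[]. Qed.

Lemma sum_delta (T : finType) (F : T -> Cx) x : \sum_j F j * (j == x)%:R = F x.
Proof.
rewrite (bigD1 x) //= eqxx mulr1 big1 ?addr0 // => j /negbTE ->.
by rewrite mulr0.
Qed.

Lemma sum_enum_rank (T : finType) (V : nmodType) (F : 'I_#|T| -> V) :
  \sum_i F i = \sum_x F (enum_rank x).
Proof.
by rewrite (reindex enum_rank) //; exists enum_val => x _; rewrite ?enum_rankK ?enum_valK.
Qed.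

Lemma sum_pair (X Y : finType) (V : nmodType) (F : X * Y -> V) :
  \sum_z F z = \sum_x \sum_y F (x, y).
Proof. by rewrite pair_bigA; apply: eq_bigr => -[]. Qed.

Definition ip (T : finType) (f g : T -> Cx) : Cx := \sum_t conjc (f t) * g t.

Definition qform (I : finType) (M : op R I) (v : I -> Cx) : Cx :=
  \sum_i \sum_j cconj (v i) * M i j * v j.

Definition tens (X Y : finType) (f : X -> Cx) (g : Y -> Cx) : X * Y -> Cx :=
  fun z => f z.1 * g z.2.

Definition delta (T : finType) (j : T) : T -> Cx := fun y => (j == y)%:R.

Lemma ip_conj (T : finType) (f g : T -> Cx) : conjc (ip f g) = ip g f.
Proof.
rewrite /ip rmorph_sum; apply: eq_bigr => t _.
by rewrite rmorphM /= conjcK mulrC.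
Qed.

Lemma ip_tens (X Y : finType) (f f' : X -> Cx) (g g' : Y -> Cx) :
  ip (tens f g) (tens f' g') = ip f f' * ip g g'.
Proof.
rewrite /ip /tens sum_pair mulr_suml; apply: eq_bigr => x _.
rewrite mulr_sumr; apply: eq_bigr => y _ /=; rewrite rmorphM /=; ring.
Qed.

Lemma qform_proj (I : finType) (psi : I -> Cx) v :
  qform (proj psi) v = ip v psi * conjc (ip v psi).
Proof.
rewrite /qform /proj /cconj ip_conj mulr_suml; apply: eq_bigr => i _.
rewrite mulr_sumr; apply: eq_bigr => j _; ring.
Qed.

Lemma psd_proj (I : finType) (psi : I -> Cx) : psd (proj psi).
Proof. by move=> v; rewrite -/(qform _ v) qform_proj mulcJ_ge0. Qed.

Lemma qform_delta2 (I : finType) (M : op R I) x y (a b : Cx) :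
  qform M (fun z => (z == x)%:R * a + (z == y)%:R * b) =
  conjc a * M x x * a + conjc a * M x y * b + conjc b * M y x * a + conjc b * M y y * b.
Proof.
have lin2 (F : I -> Cx) (c d : Cx) :
    \sum_j F j * ((j == x)%:R * c + (j == y)%:R * d) = F x * c + F y * d.
  rewrite -(sum_delta (fun j => F j * c)) -(sum_delta (fun j => F j * d)) -big_split.
  by apply: eq_bigr => j _ /=; ring.
rewrite /qform /cconj.
under eq_bigr do under eq_bigr do rewrite -mulrA.
under eq_bigr do rewrite -big_distrr /= (lin2 (M _)) rmorphD !rmorphM /= !rmorph_nat mulrC.
rewrite lin2; ring.
Qed.

(* The quadratic form of [[p, q], [s, t]] at (1, 0), (0, 1), (1, 1) and (1, i). *)
Lemma psd2_hermitian (p q s t : Cx) : 0 <= p -> 0 <= t -> 0 <= p + q + s + t ->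
  0 <= p + 'i%C * q - 'i%C * s + t -> s = conjc q.
Proof.
case: p => p1 p2; case: q => q1 q2; case: s => s1 s2; case: t => t1 t2.
rewrite !lecE /= => /andP[/eqP h1 _] /andP[/eqP h2 _] /andP[/eqP h3 _] /andP[/eqP h4 _].
by congr Complex; lra.
Qed.

Lemma psd_diag (I : finType) (M : op R I) x : psd M -> 0 <= M x x.
Proof.
move=> /(_ (fun z => (z == x)%:R * 1 + (z == x)%:R * 0)).
by rewrite -/(qform M _) qform_delta2 conjc1 conjc0 !mulr0 !mul0r !addr0 mul1r mulr1.
Qed.

Lemma psd_herm (I : finType) (M : op R I) x y : psd M -> M y x = conjc (M x y).
Proof.
move=> M_psd; have [<-|_] := eqVneq x y.
  move: (psd_diag x M_psd); case: (M x x) => a b.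
  by rewrite lecE /= => /andP[/eqP -> _]; rewrite oppr0.
apply: psd2_hermitian (psd_diag x M_psd) (psd_diag y M_psd) _ _.
  move: (M_psd (fun z => (z == x)%:R * 1 + (z == y)%:R * 1)).
  by rewrite -/(qform M _) qform_delta2 conjc1 !mulr1 !mul1r.
move: (M_psd (fun z => (z == x)%:R * 1 + (z == y)%:R * 'i%C)).
rewrite -/(qform M _) qform_delta2 conjc1 !mulr1 !mul1r.
have -> : conjc 'i%C = - 'i%C :> Cx by apply/eqP; rewrite eq_complex /= oppr0 !eqxx.
have -> : - 'i%C * M y y * 'i%C = M y y :> Cx.
  by rewrite mulrAC mulNr -expr2 sqr_i opprK mul1r.
congr (0 <= _); ring.
Qed.

Definition orthonormal (T : finType) (e : T -> T -> Cx) :=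
  forall k k', ip (e k) (e k') = (k == k')%:R.

Definition complete (T : finType) (e : T -> T -> Cx) :=
  forall x x', \sum_k e k x * conjc (e k x') = (x == x')%:R.

Section SpectralSum.
Variables (I : finType) (M : op R I) (d : I -> Cx) (e : I -> I -> Cx).
Hypothesis M_e : forall x x', M x x' = \sum_k d k * e k x * conjc (e k x').

Lemma qform_spectral_sum f : qform M f = \sum_k d k * ip f (e k) * ip (e k) f.
Proof.
rewrite /qform /cconj /ip.
transitivity (\sum_x \sum_x' \sum_k conjc (f x) * (d k * e k x * conjc (e k x')) * f x').
  by apply: eq_bigr => x _; apply: eq_bigr => x' _; rewrite M_e big_distrr big_distrl.
under eq_bigr do rewrite exchange_big.
rewrite exchange_big; apply: eq_bigr => k _.
rewrite [d k * _]big_distrr big_distrl; apply: eq_bigr => x _.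
rewrite big_distrr; apply: eq_bigr => x' _ /=; ring.
Qed.

Hypothesis e_on : orthonormal e.

Lemma qform_eigvec k : qform M (e k) = d k.
Proof.
rewrite qform_spectral_sum (bigD1 k) //= !e_on eqxx !mulr1 big1 ?addr0 // => j nj.
by rewrite !e_on (negbTE nj) mulr0.
Qed.

Lemma trace_spectral_sum : trace M = \sum_k d k.
Proof.
rewrite /trace; under eq_bigr do rewrite M_e.
rewrite exchange_big; apply: eq_bigr => k _.
transitivity (d k * ip (e k) (e k)); last by rewrite e_on eqxx mulr1.
rewrite /ip mulr_sumr; apply: eq_bigr => x _; ring.
Qed.

End SpectralSum.

End Operators.

Section Spectrum.
Variable R : realType.
Local Notation Cx := (complex R).
Local Open Scope sesquilinear_scope.

Lemma char_poly_similar (F : comUnitRingType) n (P A : 'M[F]_n) : P \in unitmx ->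
  char_poly (invmx P *m A *m P) = char_poly A.
Proof.
move=> P_unit; rewrite /char_poly /char_poly_mx.
have PVP : map_mx polyC (invmx P) *m map_mx polyC P = 1%:M.
  by rewrite -map_mxM mulVmx // map_mx1.
have -> : 'X%:M - map_mx polyC (invmx P *m A *m P) =
    map_mx polyC (invmx P) *m ('X%:M - map_mx polyC A) *m map_mx polyC P.
  by rewrite mulmxBr mulmxBl !map_mxM mul_mx_scalar -scalemxAl PVP scalemx1.
set a := map_mx _ (invmx P); set b := map_mx _ P; set c := _ - _.
by rewrite (det_mulmx (a *m c) b) (det_mulmx a c) mulrAC -det_mulmx PVP det1 mul1r.
Qed.

(* Block elimination of [[X, A], [B, 1]] in two ways. *)
Lemma char_poly_mulmxC (F : comNzRingType) p q (A : 'M[F]_(p, q)) (B : 'M[F]_(q, p)) :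
  'X^q * char_poly (A *m B) = 'X^p * char_poly (B *m A).
Proof.
rewrite /char_poly /char_poly_mx !map_mxM.
set a := map_mx polyC A; set b := map_mx polyC B.
pose M := block_mx ('X%:M : 'M_p) a b (1%:M : 'M_q).
have M_ur : block_mx 1%:M (-a) 0 1%:M *m M = block_mx ('X%:M - a *m b) 0 b 1%:M.
  by rewrite mulmx_block !mul1mx !mul0mx !add0r mulmx1 mulNmx addrN.
have M_ll : block_mx 1%:M 0 (-b) 'X%:M *m M = block_mx 'X%:M a 0 ('X%:M - b *m a).
  rewrite mulmx_block !mul1mx !mul0mx !addr0 mulmx1 mulNmx.
  by rewrite mul_mx_scalar mul_scalar_mx addNr mulNmx addrC.
have D1 := congr1 determinant M_ur; have D2 := congr1 determinant M_ll.
rewrite det_mulmx det_ublock !det1 mul1r det_lblock det1 mulr1 in D1.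
rewrite det_mulmx det_lblock det1 mul1r det_ublock !det_scalar in D2.
by rewrite -D1 mul1r.
Qed.

Lemma char_poly_trmx (F : comNzRingType) n (A : 'M[F]_n) : char_poly A^T = char_poly A.
Proof.
rewrite /char_poly /char_poly_mx -det_tr; congr determinant.
by apply/matrixP => i j; rewrite !mxE eq_sym.
Qed.

Lemma mx_ofE (I : finType) (M : op R I) x y :
  mx_of M (enum_rank x) (enum_rank y) = M x y.
Proof. by rewrite mxE !enum_rankK. Qed.

Lemma char_poly_spectrum (I : finType) (M : op R I) :
  char_poly (mx_of M) = \prod_(z <- spectrum M) ('X - z%:P).
Proof. exact/eqP/(xchooseP (char_poly_splits M)). Qed.

Lemma vN_entropy_char_polyX (I J : finType) (M : op R I) (N : op R J) m n :
  'X^m * char_poly (mx_of M) = 'X^n * char_poly (mx_of N) ->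
  vN_entropy M = vN_entropy N.
Proof.
have prodX k : 'X^k = \prod_(z <- nseq k (0 : Cx)) ('X - z%:P).
  by rewrite big_nseq subr0 iter_mulr_1.
have sum0 k : \sum_(z <- nseq k (0 : Cx)) xlnx (complex.Re z) = 0.
  by rewrite big1_seq // => z /andP[_]; rewrite mem_nseq => /andP[_ /eqP ->]; rewrite /xlnx eqxx.
rewrite !char_poly_spectrum !prodX -!big_cat => /prod_XsubC_eq spec_perm.
rewrite /vN_entropy; congr (- _).
by rewrite -(add0r (\sum_(z <- spectrum M) _)) -{1}(sum0 m) -big_cat (perm_big _ spec_perm)
  big_cat /= sum0 add0r.
Qed.

Lemma vN_entropy_similar_diag (I : finType) (M : op R I) (P : 'M[Cx]_#|I|) d :
  P \in unitmx -> mx_of M = invmx P *m diag_mx d *m P ->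
  vN_entropy M = - \sum_i xlnx (complex.Re (d 0 i)).
Proof.
move=> P_unit M_diag.
have spec_perm : perm_eq (spectrum M) [seq d 0 i | i <- enum 'I_#|I|].
  apply: prod_XsubC_eq; rewrite -char_poly_spectrum M_diag char_poly_similar //.
  rewrite char_poly_trig ?diag_mx_is_trig // big_map big_enum /=.
  by apply: eq_bigr => i _; rewrite mxE eqxx mulr1n.
by rewrite /vN_entropy (perm_big _ spec_perm) big_map big_enum.
Qed.

Lemma herm_mx_of (I : finType) (M : op R I) : psd M -> (mx_of M)^t* = mx_of M.
Proof.
by move=> M_psd; apply/matrixP => i j; rewrite !mxE conjCE (psd_herm (enum_val j) _ M_psd).
Qed.

Definition eigen_decomp (I : finType) (M : op R I) (l : I -> R) (e : I -> I -> Cx) :=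
  [/\ orthonormal e, complete e &
      forall x x', M x x' = \sum_k (l k)%:C * e k x * conjc (e k x')].

Lemma psd_eigen_decomp (I : finType) (M : op R I) : psd M ->
  exists l e, [/\ eigen_decomp M l e, forall k, 0 <= l k &
                  vN_entropy M = - \sum_k xlnx (l k)].
Proof.
move=> M_psd.
have /orthomx_spectralP M_diag : mx_of M \is normalmx.
  by apply/normalmxP; rewrite herm_mx_of.
set P := spectralmx (mx_of M) in M_diag; set d := spectral_diag (mx_of M) in M_diag.
have P_unitary : P \is unitarymx := spectral_unitarymx _.
have P_unit : P \in unitmx := unitarymx_unit P_unitary.
have PPt : P *m P^t* = 1%:M by apply/unitarymxP.
have PtP : P^t* *m P = 1%:M by rewrite -invmx_unitary // mulVmx.
pose e k x := conjc (P (enum_rank k) (enum_rank x)).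
pose dk k := d 0 (enum_rank k).
have e_on : orthonormal e.
  move=> k k'; have := congr1 (fun A : 'M[Cx]_#|I| => A (enum_rank k) (enum_rank k')) PPt.
  rewrite !mxE (inj_eq enum_rank_inj) => <-; rewrite sum_enum_rank.
  by apply: eq_bigr => x _; rewrite !mxE conjCE conjcK.
have e_compl : complete e.
  move=> x x'; have := congr1 (fun A : 'M[Cx]_#|I| => A (enum_rank x) (enum_rank x')) PtP.
  rewrite !mxE (inj_eq enum_rank_inj) => <-; rewrite sum_enum_rank.
  by apply: eq_bigr => k _; rewrite !mxE conjCE conjcK.
have M_e x x' : M x x' = \sum_k dk k * e k x * conjc (e k x').
  rewrite -mx_ofE M_diag invmx_unitary // mul_mx_diag !mxE sum_enum_rank.
  by apply: eq_bigr => k _; rewrite !mxE /e /dk conjcK conjCE; ring.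
have dk_ge0 k : 0 <= dk k by rewrite -(qform_eigvec M_e e_on); apply: M_psd.
exists (fun k => complex.Re (dk k)), e; split.
- split=> // x x'; rewrite M_e; apply: eq_bigr => k _.
  by rewrite -ge0_complexE.
- by move=> k; move: (dk_ge0 k); rewrite lecE => /andP[].
- by rewrite (vN_entropy_similar_diag P_unit M_diag) sum_enum_rank.
Qed.

End Spectrum.

Section Bipartite.
Variable R : realType.
Local Notation Cx := (complex R).

Definition ptr_snd (X Y : finType) (rho : op R (X * Y)%type) : op R X :=
  fun x x' => \sum_y rho (x, y) (x', y).

Definition ptr_fst (X Y : finType) (rho : op R (X * Y)%type) : op R Y :=
  fun y y' => \sum_x rho (x, y) (x, y').

Definition relabel (I J : finType) (f : I -> J) (M : op R J) : op R I :=
  fun x x' => M (f x) (f x').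

Lemma trace_ptr_snd (X Y : finType) (rho : op R (X * Y)%type) :
  trace (ptr_snd rho) = trace rho.
Proof. by rewrite /trace /ptr_snd sum_pair. Qed.

Lemma trace_ptr_fst (X Y : finType) (rho : op R (X * Y)%type) :
  trace (ptr_fst rho) = trace rho.
Proof. by rewrite /trace /ptr_fst sum_pair exchange_big. Qed.

Lemma complete_delta (T : finType) : complete (@delta R T).
Proof.
move=> y y'; under eq_bigr do rewrite /delta conjc_nat.
by rewrite sum_delta eq_sym.
Qed.

Lemma complete_tens (X Y : finType) (u : X -> X -> Cx) (v : Y -> Y -> Cx) :
  complete u -> complete v -> complete (fun ij : X * Y => tens (u ij.1) (v ij.2)).
Proof.
move=> u_compl v_compl [x y] [x' y']; rewrite sum_pair /tens /= xpair_eqE.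
transitivity ((\sum_i u i x * conjc (u i x')) * \sum_j v j y * conjc (v j y')).
  rewrite mulr_suml; apply: eq_bigr => i _; rewrite mulr_sumr; apply: eq_bigr => j _.
  rewrite rmorphM /=; ring.
by rewrite u_compl v_compl -natrM mulnb.
Qed.

Lemma parseval (T : finType) (e : T -> T -> Cx) (f g : T -> Cx) : complete e ->
  \sum_k ip f (e k) * ip (e k) g = ip f g.
Proof.
move=> e_compl.
transitivity (\sum_k \sum_t \sum_t' conjc (f t) * (e k t * conjc (e k t')) * g t').
  apply: eq_bigr => k _; rewrite /ip mulr_suml; apply: eq_bigr => t _.
  rewrite mulr_sumr; apply: eq_bigr => t' _; ring.
rewrite exchange_big /=; apply: eq_bigr => t _; rewrite exchange_big /=.
under eq_bigr do rewrite -mulr_suml -mulr_sumr e_compl.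
by under eq_bigr do rewrite mulrAC eq_sym; rewrite sum_delta.
Qed.

Lemma qform_ptr_snd (X Y : finType) (rho : op R (X * Y)%type) (v : Y -> Y -> Cx) f :
  complete v -> qform (ptr_snd rho) f = \sum_j qform rho (tens f (v j)).
Proof.
move=> v_compl; apply/esym; rewrite /qform /cconj /tens.
transitivity (\sum_z \sum_z' conjc (f z.1) * rho z z' * f z'.1 * (z'.2 == z.2)%:R).
  rewrite exchange_big; apply: eq_bigr => z _; rewrite exchange_big; apply: eq_bigr => z' _.
  rewrite -(v_compl z'.2 z.2) mulr_sumr; apply: eq_bigr => j _; rewrite rmorphM /=; ring.
rewrite sum_pair; apply: eq_bigr => x _; rewrite /ptr_snd.
rewrite exchange_big sum_pair /=; apply: eq_bigr => x' _.
rewrite exchange_big /= mulr_sumr mulr_suml; apply: eq_bigr => y _.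
by rewrite sum_delta.
Qed.

Lemma qform_ptr_fst (X Y : finType) (rho : op R (X * Y)%type) (u : X -> X -> Cx) g :
  complete u -> qform (ptr_fst rho) g = \sum_i qform rho (tens (u i) g).
Proof.
move=> u_compl; apply/esym; rewrite /qform /cconj /tens.
transitivity (\sum_z \sum_z' conjc (g z.2) * rho z z' * g z'.2 * (z'.1 == z.1)%:R).
  rewrite exchange_big; apply: eq_bigr => z _; rewrite exchange_big; apply: eq_bigr => z' _.
  rewrite -(u_compl z'.1 z.1) mulr_sumr; apply: eq_bigr => i _; rewrite rmorphM /=; ring.
rewrite sum_pair exchange_big /=; apply: eq_bigr => y _; rewrite /ptr_fst.
rewrite exchange_big sum_pair /= exchange_big /=; apply: eq_bigr => y' _.
rewrite mulr_sumr mulr_suml; apply: eq_bigr => x _.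
by under eq_bigr do rewrite eq_sym; rewrite sum_delta.
Qed.

Lemma psd_ptr_snd (X Y : finType) (rho : op R (X * Y)%type) : psd rho -> psd (ptr_snd rho).
Proof.
move=> rho_psd f; rewrite -/(qform _ f) (qform_ptr_snd _ _ (@complete_delta Y)).
by apply: sumr_ge0 => j _; apply: rho_psd.
Qed.

Lemma psd_ptr_fst (X Y : finType) (rho : op R (X * Y)%type) : psd rho -> psd (ptr_fst rho).
Proof.
move=> rho_psd g; rewrite -/(qform _ g) (qform_ptr_fst _ _ (@complete_delta X)).
by apply: sumr_ge0 => i _; apply: rho_psd.
Qed.

Lemma psd_relabel (I J : finType) (f : I -> J) (M : op R J) :
  bijective f -> psd M -> psd (relabel f M).
Proof.
move=> f_bij M_psd v; have [g fK _] := f_bij.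
have sum_f (F : J -> Cx) : \sum_j F j = \sum_i F (f i) by apply: reindex; exact: onW_bij.
have := M_psd (v \o g); rewrite sum_f; under eq_bigr do rewrite sum_f.
by under eq_bigr do under eq_bigr do rewrite /= !fK.
Qed.

Lemma trace_relabel (I J : finType) (f : I -> J) (M : op R J) :
  bijective f -> trace (relabel f M) = trace M.
Proof. by move=> f_bij; rewrite /trace (reindex f) //; exact: onW_bij. Qed.

(* Both reduced states of a pure state are, up to transposition, of the form
   [Psi^* Psi^T] and [Psi^T Psi^*] for the coefficient matrix [Psi]. *)
Lemma vN_entropy_ptr_proj (X Y : finType) (psi : X * Y -> Cx) :
  vN_entropy (ptr_snd (proj psi)) = vN_entropy (ptr_fst (proj psi)).
Proof.
pose Psi := \matrix_(i < #|X|, j < #|Y|) psi (enum_val i, enum_val j).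
have snd_mx : (mx_of (ptr_snd (proj psi)))^T = map_mx Num.conj Psi *m Psi^T.
  apply/matrixP => i i'; rewrite !mxE sum_enum_rank; apply: eq_bigr => y _.
  by rewrite !mxE enum_rankK conjCE mulrC.
have fst_mx : mx_of (ptr_fst (proj psi)) = Psi^T *m map_mx Num.conj Psi.
  apply/matrixP => j j'; rewrite !mxE sum_enum_rank; apply: eq_bigr => x _.
  by rewrite !mxE enum_rankK conjCE.
have := char_poly_mulmxC (map_mx Num.conj Psi) Psi^T.
by rewrite -snd_mx -fst_mx char_poly_trmx => /vN_entropy_char_polyX.
Qed.

Lemma psd_purification (I : finType) (M : op R I) : psd M ->
  exists phi : I * I -> Cx, M = ptr_snd (proj phi).
Proof.
case/psd_eigen_decomp=> l [e [[_ _ M_e] l_ge0 _]].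
exists (fun z => (Num.sqrt (l z.2))%:C * e z.2 z.1).
apply/funext => x; apply/funext => x'; rewrite M_e; apply: eq_bigr => k _.
rewrite /proj /cconj /= conjcM conjc_real.
rewrite -[in LHS](sqr_sqrtr (l_ge0 k)) expr2 rmorphM /=; ring.
Qed.

Lemma vN_entropy_relabel (I J : finType) (f : I -> J) (M : op R J) :
  bijective f -> psd M -> vN_entropy (relabel f M) = vN_entropy M.
Proof.
move=> f_bij /psd_purification[phi ->].
have -> : relabel f (ptr_snd (proj phi)) = ptr_snd (proj (fun z => phi (f z.1, z.2))) by [].
rewrite !vN_entropy_ptr_proj; congr vN_entropy.
apply/funext => k; apply/funext => k'.
by rewrite /ptr_fst (reindex f) //; exact: onW_bij.
Qed.

Lemma vN_entropy_proj (I : finType) (psi : I -> Cx) : unit_vector psi ->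
  vN_entropy (proj psi) = 0.
Proof.
move=> psi1; pose psi' (z : I * unit) := psi z.1.
(* [proj psi] is the reduced state of [psi] tensored with a one-dimensional system. *)
have -> : proj psi = ptr_snd (proj psi').
  by apply/funext => x; apply/funext => x'; rewrite /ptr_snd sum_unit.
rewrite vN_entropy_ptr_proj.
have [l [e [[e_on _ N_e] _ ->]]] := psd_eigen_decomp (psd_ptr_fst (psd_proj psi')).
have : trace (ptr_fst (proj psi')) = 1 by rewrite /trace sum_unit.
rewrite (trace_spectral_sum N_e e_on) !sum_unit => /complexI ->.
by rewrite /xlnx oner_eq0 ln1 mulr0 oppr0.
Qed.

End Bipartite.

Section Subadditivity.
Variable R : realType.

Lemma xlnxE (x : R) : xlnx x = x * ln x.
Proof. by rewrite /xlnx; case: eqP => [->|//]; rewrite mul0r. Qed.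

Lemma ln_le_subr1 (x : R) : 0 < x -> ln x <= x - 1.
Proof. by move=> x_gt0; have := expR_ge1Dx (ln x); rewrite lnK ?posrE // => ?; lra. Qed.

Lemma ler_sum_term (T : finType) (F : T -> R) t :
  (forall u, 0 <= F u) -> F t <= \sum_u F u.
Proof. by move=> F_ge0; rewrite (bigD1 t) //= lerDl sumr_ge0. Qed.

(* Gibbs' inequality for the two distributions [p k * q k i j] and
   [q k i j * a i * b j] on triples, whose total masses are both 1. *)
Lemma sum_xlnx_marginals_le (K I J : finType) (p : K -> R) (q : K -> I -> J -> R)
    (a : I -> R) (b : J -> R) :
  (forall k, 0 <= p k) -> (forall k i j, 0 <= q k i j) ->
  (forall k, \sum_i \sum_j q k i j = 1) -> (forall i j, \sum_k q k i j = 1) ->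
  (forall i, \sum_j \sum_k p k * q k i j = a i) ->
  (forall j, \sum_i \sum_k p k * q k i j = b j) ->
  \sum_k p k = 1 ->
  \sum_i xlnx (a i) + \sum_j xlnx (b j) <= \sum_k xlnx (p k).
Proof.
move=> p_ge0 q_ge0 q_row q_col a_def b_def p1.
have pq_ge0 k i j : 0 <= p k * q k i j by apply: mulr_ge0.
have pq_le_a k i j : p k * q k i j <= a i.
  rewrite -a_def; apply: le_trans (ler_sum_term j _); last by move=> j'; apply: sumr_ge0.
  exact: ler_sum_term.
have pq_le_b k i j : p k * q k i j <= b j.
  rewrite -b_def; apply: le_trans (ler_sum_term i _); last by move=> i'; apply: sumr_ge0.
  exact: ler_sum_term.
have a1 : \sum_i a i = 1.
  rewrite -p1; under eq_bigr do rewrite -a_def exchange_big /=.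
  rewrite exchange_big /=; apply: eq_bigr => k _.
  by rewrite -[RHS]mulr1 -(q_row k) mulr_sumr; apply: eq_bigr => i _; rewrite mulr_sumr.
have b1 : \sum_j b j = 1.
  rewrite -a1; under eq_bigr do rewrite -b_def.
  by rewrite exchange_big; apply: eq_bigr => i _; apply: a_def.
have gibbs i j k : p k * q k i j * (ln (a i) + ln (b j) - ln (p k)) <=
                   q k i j * (a i * b j - p k).
  have [pq0|pq_neq0] := eqVneq (p k * q k i j) 0.
    rewrite pq0 mul0r; have [->|q_neq0] := eqVneq (q k i j) 0; first by rewrite mul0r.
    move/eqP: pq0; rewrite mulf_eq0 (negbTE q_neq0) orbF => /eqP ->.
    rewrite subr0 mulr_ge0 // mulr_ge0 //.
      exact: le_trans (pq_ge0 k i j) (pq_le_a k i j).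
    exact: le_trans (pq_ge0 k i j) (pq_le_b k i j).
  have pq_gt0 : 0 < p k * q k i j by rewrite lt_def pq_neq0 pq_ge0.
  have ai_gt0 : 0 < a i := lt_le_trans pq_gt0 (pq_le_a k i j).
  have bj_gt0 : 0 < b j := lt_le_trans pq_gt0 (pq_le_b k i j).
  have pk_gt0 : 0 < p k.
    by rewrite lt_def p_ge0 andbT; apply: contraNneq pq_neq0 => ->; rewrite mul0r.
  have -> : q k i j * (a i * b j - p k) = p k * q k i j * (a i * b j / p k - 1).
    by field; rewrite gt_eqF.
  rewrite ler_pM2l // -lnM ?posrE // -ln_div ?posrE ?mulr_gt0 //.
  by apply: ln_le_subr1; rewrite divr_gt0 ?mulr_gt0.
have lhsE : \sum_i \sum_j \sum_k p k * q k i j * (ln (a i) + ln (b j) - ln (p k)) =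
    \sum_i xlnx (a i) + \sum_j xlnx (b j) - \sum_k xlnx (p k).
  have sum_a : \sum_i xlnx (a i) = \sum_i \sum_j \sum_k p k * q k i j * ln (a i).
    apply: eq_bigr => i _; rewrite xlnxE -a_def mulr_suml; apply: eq_bigr => j _.
    by rewrite mulr_suml.
  have sum_b : \sum_j xlnx (b j) = \sum_i \sum_j \sum_k p k * q k i j * ln (b j).
    rewrite exchange_big; apply: eq_bigr => j _; rewrite xlnxE -b_def mulr_suml.
    by apply: eq_bigr => i _; rewrite mulr_suml.
  have sum_p : \sum_k xlnx (p k) = \sum_i \sum_j \sum_k p k * q k i j * ln (p k).
    under [RHS]eq_bigr do rewrite exchange_big.
    rewrite exchange_big; apply: eq_bigr => k _.
    rewrite xlnxE -[LHS]mul1r -(q_row k) !mulr_suml; apply: eq_bigr => i _.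
    by rewrite mulr_suml; apply: eq_bigr => j _; ring.
  rewrite sum_a sum_b sum_p -big_split -sumrB; apply: eq_bigr => i _.
  rewrite -big_split -sumrB; apply: eq_bigr => j _.
  by rewrite -big_split -sumrB; apply: eq_bigr => k _ /=; ring.
have rhsE : \sum_i \sum_j \sum_k q k i j * (a i * b j - p k) = 0.
  have row_ij i j : \sum_k q k i j * (a i * b j - p k) = a i * b j - \sum_k p k * q k i j.
    transitivity (a i * b j * \sum_k q k i j - \sum_k p k * q k i j).
      by rewrite mulr_sumr -sumrB; apply: eq_bigr => k _; ring.
    by rewrite q_col mulr1.
  under eq_bigr do under eq_bigr do rewrite row_ij.
  under eq_bigr do rewrite sumrB -mulr_sumr b1 mulr1 a_def subrr.
  by rewrite big1.
have : \sum_i \sum_j \sum_k p k * q k i j * (ln (a i) + ln (b j) - ln (p k)) <=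
       \sum_i \sum_j \sum_k q k i j * (a i * b j - p k).
  by apply: ler_sum => i _; apply: ler_sum => j _; apply: ler_sum => k _; apply: gibbs.
by rewrite lhsE rhsE subr_le0.
Qed.

(* Expand [rho], [rho_X] and [rho_Y] in eigenbases [w], [u], [v]; the overlaps
   [|<w k, u i (x) v j>|^2] form the doubly stochastic family [q]. *)
Lemma vN_entropy_subadd (X Y : finType) (rho : op R (X * Y)%type) :
  psd rho -> trace rho = 1 ->
  vN_entropy rho <= vN_entropy (ptr_snd rho) + vN_entropy (ptr_fst rho).
Proof.
move=> rho_psd rho1.
have [p [w [[w_on w_compl rho_w] p_ge0 ->]]] := psd_eigen_decomp rho_psd.
have [a [u [[u_on u_compl rhoX_u] _ ->]]] := psd_eigen_decomp (psd_ptr_snd rho_psd).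
have [b [v [[v_on v_compl rhoY_v] _ ->]]] := psd_eigen_decomp (psd_ptr_fst rho_psd).
pose c k i j := ip (w k) (tens (u i) (v j)).
pose q k i j := complex.Re (c k i j * conjc (c k i j)).
have qE k i j : (q k i j)%:C = ip (w k) (tens (u i) (v j)) * ip (tens (u i) (v j)) (w k).
  by rewrite -[ip (tens _ _) (w k)]ip_conj -ge0_complexE // mulcJ_ge0.
have q_ge0 k i j : 0 <= q k i j by move: (mulcJ_ge0 (c k i j)); rewrite lecE => /andP[].
suff : \sum_i xlnx (a i) + \sum_j xlnx (b j) <= \sum_k xlnx (p k) by lra.
apply: (sum_xlnx_marginals_le p_ge0 q_ge0) => [k|i j|i|j|].
- apply: complexI; rewrite rmorph_sum /=; under eq_bigr do rewrite rmorph_sum /=.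
  transitivity (ip (w k) (w k)); last by rewrite w_on eqxx.
  rewrite -(parseval _ _ (complete_tens u_compl v_compl)) sum_pair.
  by apply: eq_bigr => i _; apply: eq_bigr => j _; rewrite qE.
- apply: complexI; rewrite rmorph_sum /=; under eq_bigr do rewrite qE mulrC.
  by rewrite parseval // ip_tens u_on v_on !eqxx mulr1.
- apply: complexI; rewrite rmorph_sum /= -(qform_eigvec rhoX_u u_on i).
  rewrite (qform_ptr_snd _ _ v_compl); apply: eq_bigr => j _.
  rewrite rmorph_sum (qform_spectral_sum rho_w); apply: eq_bigr => k _.
  by rewrite rmorphM /= qE; ring.
- apply: complexI; rewrite rmorph_sum /= -(qform_eigvec rhoY_v v_on j).
  rewrite (qform_ptr_fst _ _ u_compl); apply: eq_bigr => i _.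
  rewrite rmorph_sum (qform_spectral_sum rho_w); apply: eq_bigr => k _.
  by rewrite rmorphM /= qE; ring.
- by apply: complexI; rewrite rmorph_sum /= -(trace_spectral_sum rho_w w_on).
Qed.

(* Purify [rho] by a reference system [K]: [S(X) = S(YK) <= S(Y) + S(K)] and
   [S(K) = S(XY)]. *)
Lemma araki_lieb (X Y : finType) (rho : op R (X * Y)%type) :
  psd rho -> trace rho = 1 ->
  vN_entropy (ptr_snd rho) <= vN_entropy (ptr_fst rho) + vN_entropy rho.
Proof.
move=> rho_psd rho1; have [phi rhoE] := psd_purification rho_psd.
pose chi (z : X * (Y * (X * Y))) := phi ((z.1, z.2.1), z.2.2).
pose tau := ptr_fst (proj chi).
have tau1 : trace tau = 1.
  rewrite trace_ptr_fst -rho1 rhoE trace_ptr_snd /trace sum_pair [RHS]sum_pair [RHS]sum_pair.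
  by apply: eq_bigr => x _; rewrite sum_pair.
have rhoX : ptr_snd rho = ptr_snd (proj chi).
  by rewrite rhoE; apply/funext => x; apply/funext => x'; rewrite [RHS]sum_pair.
have tauY : ptr_snd tau = ptr_fst rho.
  apply/funext => y; apply/funext => y'.
  by rewrite rhoE /tau /ptr_snd /ptr_fst exchange_big.
have tauK : ptr_fst tau = ptr_fst (proj phi).
  apply/funext => k; apply/funext => k'.
  by rewrite /ptr_fst [RHS]sum_pair exchange_big.
have := vN_entropy_subadd (psd_ptr_fst (psd_proj chi)) tau1.
by rewrite tauY tauK /tau -!vN_entropy_ptr_proj -rhoX -rhoE.
Qed.

Lemma araki_lieb_relabel (X Y I : finType) (h : X * Y -> I) (sigma : op R I) :
  bijective h -> psd sigma -> trace sigma = 1 ->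
  vN_entropy (ptr_snd (relabel h sigma)) <=
  vN_entropy (ptr_fst (relabel h sigma)) + vN_entropy sigma.
Proof.
move=> h_bij sigma_psd sigma1; rewrite -(vN_entropy_relabel h_bij sigma_psd).
by apply: araki_lieb; [exact: psd_relabel | rewrite trace_relabel].
Qed.

End Subadditivity.

Section Channel.
Variable R : realType.

(* The bipartitions BC|A and AC|B of ABC, as reorderings of the factors. *)
Definition cut_A (A B C : finType) (z : ((B * C) * A)%type) : ((A * B) * C)%type :=
  ((z.2, z.1.1), z.1.2).

Definition cut_B (A B C : finType) (z : ((A * C) * B)%type) : ((A * B) * C)%type :=
  ((z.1.1, z.2), z.1.2).

Lemma cut_A_bij (A B C : finType) : bijective (@cut_A A B C).
Proof. by exists (fun z => ((z.1.2, z.2), z.1.1)) => -[[? ?] ?]. Qed.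

Lemma cut_B_bij (A B C : finType) : bijective (@cut_B A B C).
Proof. by exists (fun z => ((z.1.1, z.2), z.1.2)) => -[[? ?] ?]. Qed.

Section Marginals.
Variables (A B C : finType) (rho : op R ((A * B) * C)%type).

Lemma ptr_C_snd : ptr_C rho = ptr_snd rho.
Proof. by []. Qed.

Lemma ptr_A_cut : ptr_A rho = ptr_snd (relabel (@cut_A A B C) rho).
Proof. by []. Qed.

Lemma ptr_AC_cut : ptr_AC rho = ptr_fst (relabel (@cut_B A B C) rho).
Proof. by apply/funext => b; apply/funext => b'; rewrite /ptr_fst sum_pair. Qed.

Lemma ptr_fst_cut_B : ptr_fst rho = ptr_fst (ptr_snd (relabel (@cut_B A B C) rho)).
Proof. by apply/funext => c; apply/funext => c'; rewrite /ptr_fst sum_pair. Qed.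

Lemma ptr_fst_cut_A :
  ptr_fst (relabel (@cut_A A B C) rho) = ptr_snd (ptr_snd (relabel (@cut_B A B C) rho)).
Proof.
by apply/funext => a; apply/funext => a'; rewrite /ptr_fst /ptr_snd sum_pair exchange_big.
Qed.

End Marginals.

Section ApplyOnB.
Variables (A B B' C : finType) (E : op R B -> op R B') (rho : op R ((A * B) * C)%type).
Hypothesis E_tp : forall X, trace (E X) = trace X.

Lemma ptr_B_apply_on_B :
  ptr_snd (relabel (@cut_B A B' C) (apply_on_B E rho)) = ptr_snd (relabel (@cut_B A B C) rho).
Proof.
apply/funext => -[a c]; apply/funext => -[a' c'].
exact: (E_tp (fun b b' => rho ((a, b), c) ((a', b'), c'))).
Qed.

Lemma ptr_AB_apply_on_B : ptr_fst (apply_on_B E rho) = ptr_fst rho.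
Proof. by rewrite !ptr_fst_cut_B ptr_B_apply_on_B. Qed.

Lemma ptr_BC_apply_on_B :
  ptr_fst (relabel (@cut_A A B' C) (apply_on_B E rho)) = ptr_fst (relabel (@cut_A A B C) rho).
Proof. by rewrite !ptr_fst_cut_A ptr_B_apply_on_B. Qed.

Lemma trace_apply_on_B : trace (apply_on_B E rho) = trace rho.
Proof.
rewrite -(trace_relabel _ (@cut_B_bij A B' C)) -trace_ptr_snd ptr_B_apply_on_B.
by rewrite trace_ptr_snd trace_relabel //; exact: cut_B_bij.
Qed.

End ApplyOnB.

(* Complete positivity is stated for ['I_n (x) B]; the environment [A (x) C] is
   encoded in ['I_#|A * C|]. *)
Definition pack (A B C : finType) (x : ((A * B) * C)%type) : ('I_#|{: A * C}| * B)%type :=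
  (enum_rank (x.1.1, x.2), x.1.2).

Definition unpack (A B C : finType) (p : ('I_#|{: A * C}| * B)%type) : ((A * B) * C)%type :=
  (((enum_val p.1).1, p.2), (enum_val p.1).2).

Lemma packK (A B C : finType) : cancel (@pack A B C) (@unpack A B C).
Proof. by move=> [[a b] c]; rewrite /pack /unpack /= enum_rankK. Qed.

Lemma unpackK (A B C : finType) : cancel (@unpack A B C) (@pack A B C).
Proof. by move=> [i b]; rewrite /pack /unpack /= -surjective_pairing enum_valK. Qed.

Lemma apply_on_B_id_tensor (A B B' C : finType) (E : op R B -> op R B')
    (rho : op R ((A * B) * C)%type) :
  apply_on_B E rho = relabel (@pack A B' C) (id_tensor E (relabel (@unpack A B C) rho)).
Proof.
apply/funext => x; apply/funext => y; rewrite /relabel /id_tensor /apply_on_B /=.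
by congr (E _ _ _); apply/funext => b; apply/funext => b'; rewrite /unpack /= !enum_rankK.
Qed.

Lemma psd_apply_on_B (A B B' C : finType) (E : op R B -> op R B')
    (rho : op R ((A * B) * C)%type) :
  CPTP E -> psd rho -> psd (apply_on_B E rho).
Proof.
case=> _ _ E_cp rho_psd; rewrite apply_on_B_id_tensor.
apply: psd_relabel (Bijective (@packK A B' C) (@unpackK A B' C)) _; apply: E_cp.
exact: psd_relabel (Bijective (@unpackK A B C) (@packK A B C)) rho_psd.
Qed.

End Channel.

Theorem mainTheorem3 (R : realType) (A B B' C : finType)
    (psi : ((A * B) * C)%type -> complex R) (E : op R B -> op R B') :
  unit_vector psi -> CPTP E ->
  let rho := proj psi in
  let sigma := apply_on_B E rho in
  cmi sigma - cmi rho <= 2 * vN_entropy sigma.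
Proof.
move=> psi1 E_cptp; have [_ E_tp _] := E_cptp; cbv zeta.
set rho := proj psi; set sigma := apply_on_B E rho.
have sigma_psd : psd sigma := psd_apply_on_B E_cptp (psd_proj psi).
have sigma1 : trace sigma = 1 by rewrite trace_apply_on_B.
have AL_C := araki_lieb sigma_psd sigma1.
have AL_A := araki_lieb_relabel (@cut_A_bij A B' C) sigma_psd sigma1.
have AL_B := araki_lieb_relabel (@cut_B_bij A B' C) sigma_psd sigma1.
rewrite ptr_AB_apply_on_B // in AL_C.
rewrite ptr_BC_apply_on_B // in AL_A.
rewrite ptr_B_apply_on_B // in AL_B.
have pure_C : vN_entropy (ptr_snd rho) = vN_entropy (ptr_fst rho) := vN_entropy_ptr_proj psi.
have pure (X Y : finType) (h : X * Y -> (A * B) * C) :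
    vN_entropy (ptr_snd (relabel h rho)) = vN_entropy (ptr_fst (relabel h rho)) :=
  vN_entropy_ptr_proj (psi \o h).
have := pure _ _ (@cut_A A B C); have := pure _ _ (@cut_B A B C).
have rho0 : vN_entropy rho = 0 := vN_entropy_proj psi1.
rewrite /cmi !ptr_C_snd !ptr_A_cut !ptr_AC_cut; lra.
Qed.
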